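(* Let $X=(x_1,\dots,x_n)$, $n>0$, be a finite sequence of positive reals and $0<q\le1$. For a finite sequence $W$ of length $k$ with sorted values $w_{(1)}\le\dots\le w_{(k)}$, put $Q^1_q(W)=w_{(\lceil qk\rceil)}$. Consider the positive circllhist bins $B_{e,d}=[a,b)$ with $a=d\cdot10^{e-1}$, $b=(d+1)\cdot10^{e-1}$, $e\in\mathbb{Z}$, $d\in\{10,\dots,99\}$, and counts $H(e,d)=\#\{j:x_j\in B_{e,d}\}$. Let $\hat X^p$ be the paretro-midpoint resampling (for each bin, $H(e,d)$ copies of $\frac{2ab}{a+b}$) and $\hat X^f$ the fair resampling (for each bin with $H(e,d)=k$, the points $a+\frac{l}{k+1}(b-a)$, $l=1,\dots,k$). Then: (1) $|Q^1_q(X)-Q^1_q(\hat X^p)|\le\frac1{21}Q^1_q(X)$; (2) $|Q^1_q(X)-Q^1_q(\hat X^f)|\le\frac1{10}Q^1_q(X)$; and if the bin containing $Q^1_q(X)$ contains exactly one element of $X$, then $|Q^1_q(X)-Q^1_q(\hat X^f)|\le\frac{1}{20}Q^1_q(X)$.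
   Context: The resamplings $\hat X^p$ and $\hat X^f$ are finite sequences of length $n$ (taken over all bins). *)

From HB Require Import structures.
From mathcomp Require Import all_boot all_order all_algebra.
From mathcomp Require Import all_classical all_reals.
From mathcomp Require Import exp.
Set Implicit Arguments. Unset Strict Implicit. Unset Printing Implicit Defensive.
Import Order.TTheory GRing.Theory Num.Theory.
Local Open Scope ring_scope.

Section Circllhist.
Variable R : realType.

(* Q^1_q(W) = w_(ceil(q k)) (1-indexed order statistic), k = size W *)
Definition Q1 (q : R) (W : seq R) : R :=
  nth 0 (sort (fun x y : R => x <= y) W)
      (`|Num.ceil (q * (size W)%:R)|%N).-1.

(* bin B_{e,d} = [d*10^(e-1), (d+1)*10^(e-1)), e : int, d in 10..99 *)
Definition bin_lo (b : int * int) : R := (b.2)%:~R * (10 : R) ^ (b.1 - 1).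
Definition bin_hi (b : int * int) : R := (b.2 + 1)%:~R * (10 : R) ^ (b.1 - 1).

Definition bin_e (x : R) : int := Num.floor (ln x / ln 10).
Definition bin_of (x : R) : int * int :=
  (bin_e x, Num.floor (x / (10 : R) ^ (bin_e x - 1))).

Definition H (X : seq R) (b : int * int) : nat :=
  count (fun x => bin_of x == b) X.

Definition occupied_bins (X : seq R) : seq (int * int) :=
  undup (map bin_of X).

Definition resample_p (X : seq R) : seq R :=
  flatten [seq nseq (H X b)
                 (2 * bin_lo b * bin_hi b / (bin_lo b + bin_hi b))
          | b <- occupied_bins X].

Definition resample_f (X : seq R) : seq R :=
  flatten [seq mkseq (fun l => bin_lo b + (l.+1)%:R / ((H X b).+1)%:R
                                          * (bin_hi b - bin_lo b)) (H X b)
          | b <- occupied_bins X].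

End Circllhist.

(* Every resampled point lies in the bin that produced it, so a resampling has
   the same multiset of bins as X.  The bins are disjoint intervals, hence
   w |-> (lower end of the bin of w) is nondecreasing on positive reals; as order
   statistics commute with nondecreasing maps, Q^1_q(X) and Q^1_q of a resampling
   fall in the same bin [a, b).  Since d >= 10, every bin has 10 b <= 11 a, and
   comparing x in [a, b) with 2ab/(a+b), with any point of [a, b), or with the
   midpoint (the only fair point of a bin holding one element) gives the
   constants 1/21, 1/10 and 1/20. *)

From HB Require Import structures.
From mathcomp Require Import all_boot all_order all_algebra.
From mathcomp Require Import all_classical all_reals.
From mathcomp Require Import exp.
From mathcomp Require Import lra zify.
Set Implicit Arguments. Unset Strict Implicit.
Import Order.TTheory GRing.Theory Num.Theory.
Local Open Scope ring_scope.

Lemma nth_sort_map (d d' : Order.disp_t) (T : orderType d) (T' : orderType d')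
    (P : {pred T}) (f : T -> T') (s : seq T) (x0 : T) (k : nat) :
  {in P &, {homo f : x y / (x <= y)%O}} -> all P s -> (k < size s)%N ->
  nth (f x0) (sort <=%O (map f s)) k = f (nth x0 (sort <=%O s) k).
Proof.
move=> f_homo Ps lt_ks.
have sorted_f : sorted <=%O (map f (sort <=%O s)).
  by apply: homo_sorted_in f_homo _ (sort_sorted le_total s); rewrite all_sort.
have perm_sorted : perm_eq (sort <=%O s) s by rewrite perm_sort.
rewrite -(perm_sort_leP _ _ (perm_map f perm_sorted)).
by rewrite sort_le_id // (nth_map x0) ?size_sort.
Qed.

Lemma Q1_rank_lt (R : realType) (q : R) (n : nat) :
  (0 < n)%N -> 0 < q -> q <= 1 -> ((`|Num.ceil (q * n%:R)|%N).-1 < n)%N.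
Proof.
move=> n_gt0 q_gt0 q_le1.
have c_gt0 : 0 < Num.ceil (q * n%:R) by rewrite ceil_gt0 mulr_gt0 // ltr0n.
have c_le : Num.ceil (q * n%:R) <= n%:Z by rewrite ceil_le_int ler_piMl // ler0n.
lia.
Qed.

Lemma Q1_mem (R : realType) (q : R) (W : seq R) :
  (0 < size W)%N -> 0 < q -> q <= 1 -> Q1 q W \in W.
Proof.
by move=> W_ne0 q_gt0 q_le1; rewrite -(mem_sort <=%O) mem_nth ?size_sort ?Q1_rank_lt.
Qed.

Definition valid_bin (b : int * int) := (10 <= b.2 <= 99)%R.

Section Bins.
Variable R : realType.

Lemma ln_exprz (x : R) (e : int) : 0 < x -> ln (x ^ e) = e%:~R * ln x.
Proof.
move=> x_gt0; have xn_gt0 n : 0 < x ^+ n by rewrite exprn_gt0.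
case: e => n; first by rewrite /= lnXn // -mulr_natl.
by rewrite NegzE -exprnN lnV ?posrE // lnXn // mulrNz mulNr -mulr_natl.
Qed.

Lemma le_bin_e (w : R) (e : int) : 0 < w -> (e <= bin_e w) = (10 ^ e <= w).
Proof.
move=> w_gt0; have ln10_gt0 : 0 < ln (10 : R) by rewrite ln_gt0 ?ltr1n.
by rewrite floor_ge_int ler_pdivlMr // -ln_exprz // ler_ln ?posrE ?exprz_gt0.
Qed.

Lemma bin_e_lt (w : R) (e : int) : 0 < w -> (bin_e w < e) = (w < 10 ^ e).
Proof. by move=> w_gt0; rewrite ltNge le_bin_e // -ltNge. Qed.

Lemma expr10zD1 (e : int) : (10 : R) ^ (e + 1) = 10 * 10 ^ e.
Proof. by rewrite expfzDr ?pnatr_eq0 // mulrC. Qed.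

Lemma bin_ofP (w : R) : 0 < w ->
  valid_bin (bin_of w) /\ bin_lo R (bin_of w) <= w < bin_hi R (bin_of w).
Proof.
move=> w_gt0; rewrite /valid_bin /bin_lo /bin_hi /=.
set e := bin_e w; set t := (10 : R) ^ (e - 1).
have t_gt0 : 0 < t by rewrite exprz_gt0.
have E1 : (10 : R) ^ e = 10 * t by rewrite -expr10zD1 subrK.
have E2 : (10 : R) ^ (e + 1) = 100 * t by rewrite expr10zD1 E1 mulrA -natrM.
have lo_w : 10 <= w / t by rewrite ler_pdivlMr // -E1 -le_bin_e.
have w_hi : w / t < 100 by rewrite ltr_pdivrMr // -E2 -bin_e_lt ?ltzD1.
have fl := floor_itv (w / t); rewrite ler_pdivlMr // ltr_pdivrMr // in fl.
split; last exact: fl.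
rewrite floor_ge_int -ltzD1 floor_lt_int lo_w /=.
by rewrite (_ : 99 + 1 = 100).
Qed.

Lemma bin_of_eq (b : int * int) (w : R) : valid_bin b ->
  bin_lo R b <= w < bin_hi R b -> bin_of w = b.
Proof.
case: b => e d; rewrite /valid_bin /bin_lo /bin_hi /= intrD.
move=> /andP[d_ge d_le] /andP[lo_w w_hi].
set t := (10 : R) ^ (e - 1) in lo_w w_hi; set D : R := d%:~R in lo_w w_hi.
have t_gt0 : 0 < t by rewrite exprz_gt0.
have D_ge : 10 <= D by rewrite -[10]/((10 : int)%:~R) ler_int.
have D_le : D + 1 <= 100 by rewrite -[100]/((99 + 1 : int)%:~R) intrD lerD2r ler_int.
have E1 : (10 : R) ^ e = 10 * t by rewrite -expr10zD1 subrK.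
have w_gt0 : 0 < w by nra.
have e_eq : bin_e w = e.
  apply/eqP; rewrite eq_le -ltzD1 bin_e_lt // le_bin_e // expr10zD1 E1.
  by apply/andP; split; nra.
rewrite /bin_of e_eq; congr pair; apply: floor_def.
by rewrite ler_pdivlMr // ltr_pdivrMr // intrD lo_w w_hi.
Qed.

Lemma valid_bin_bounds (b : int * int) : valid_bin b ->
  [/\ 0 < bin_lo R b, bin_lo R b < bin_hi R b & 10 * bin_hi R b <= 11 * bin_lo R b].
Proof.
case: b => e d; rewrite /valid_bin /bin_lo /bin_hi /= intrD => /andP[d_ge _].
have t_gt0 : 0 < (10 : R) ^ (e - 1) by rewrite exprz_gt0.
have D_ge : 10 <= d%:~R :> R by rewrite -[10]/((10 : int)%:~R) ler_int.
by split; nra.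
Qed.

Lemma bin_of_bin_lo (b : int * int) : valid_bin b -> bin_of (bin_lo R b) = b.
Proof.
move=> valid_b; apply: bin_of_eq; rewrite // lexx.
by have [_ ? _] := valid_bin_bounds valid_b.
Qed.

Lemma bin_lo_bin_of_homo : {in [pred w : R | 0 < w] &,
  {homo (fun w => bin_lo R (bin_of w)) : x y / x <= y}}.
Proof.
move=> x y /[!inE] x_gt0 y_gt0 le_xy; rewrite leNgt; apply/negP => lt_yx.
have [valid_x /andP[lo_x _]] := bin_ofP x_gt0.
have [valid_y /andP[_ y_hi]] := bin_ofP y_gt0.
set a := bin_lo R (bin_of x) in lo_x lt_yx.
have a_bin_y : bin_of a = bin_of y.
  by apply: bin_of_eq; rewrite // (ltW lt_yx) (le_lt_trans (le_trans lo_x le_xy) y_hi).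
by move: lt_yx; rewrite /a -a_bin_y bin_of_bin_lo // ltxx.
Qed.

Lemma bin_of_nth_sort (X Y : seq R) (k : nat) :
  all (fun x => 0 < x) X -> all (fun y => 0 < y) Y ->
  perm_eq (map (@bin_of R) Y) (map (@bin_of R) X) -> (k < size X)%N ->
  bin_of (nth 0 (sort <=%O Y) k) = bin_of (nth 0 (sort <=%O X) k).
Proof.
move=> X_gt0 Y_gt0 perm_YX lt_kX.
have lt_kY : (k < size Y)%N.
  by rewrite -(size_map (@bin_of R)) (perm_size perm_YX) size_map.
pose g := fun w : R => bin_lo R (bin_of w).
have bin_of_g w : 0 < w -> bin_of (g w) = bin_of w.
  by move=> /bin_ofP[valid_w _]; apply: bin_of_bin_lo.
have nth_gt0 (s : seq R) :
    all (fun x => 0 < x) s -> (k < size s)%N -> 0 < nth 0 (sort <=%O s) k.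
  by move=> /allP s_gt0 lt_ks; apply: s_gt0; rewrite -(mem_sort <=%O) mem_nth ?size_sort.
have perm_g : perm_eq (map g Y) (map g X).
  by rewrite !(map_comp (bin_lo R) (@bin_of R)) perm_map.
rewrite -bin_of_g ?nth_gt0 // -[RHS]bin_of_g ?nth_gt0 //; congr bin_of.
rewrite /g -(nth_sort_map 0 bin_lo_bin_of_homo Y_gt0 lt_kY).
rewrite -(nth_sort_map 0 bin_lo_bin_of_homo X_gt0 lt_kX).
by rewrite (perm_sort_leP _ _ perm_g).
Qed.
End Bins.

Definition resample (R : realType) (f : int * int -> nat -> R) (X : seq R) : seq R :=
  flatten [seq mkseq (f b) (H X b) | b <- occupied_bins X].

Section Resampling.
Variables (R : realType) (X : seq R) (f : int * int -> nat -> R).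
Hypothesis X_gt0 : all (fun x => 0 < x) X.
Hypothesis f_in_bin : forall b l, valid_bin b -> (l < H X b)%N ->
  bin_lo R b <= f b l < bin_hi R b.

Lemma valid_occupied_bin (b : int * int) : b \in occupied_bins X -> valid_bin b.
Proof.
by rewrite mem_undup => /mapP[x /(allP X_gt0) x_gt0 ->]; have [] := bin_ofP x_gt0.
Qed.

Lemma bin_of_resample_point (b : int * int) (l : nat) :
  b \in occupied_bins X -> (l < H X b)%N -> bin_of (f b l) = b.
Proof.
by move=> /valid_occupied_bin valid_b lt_l; apply: bin_of_eq; last exact: f_in_bin.
Qed.

Lemma mem_resample (y : R) : y \in resample f X ->
  exists2 b, b \in occupied_bins X & exists2 l, (l < H X b)%N & y = f b l.
Proof.
case/flattenP => _ /mapP[b occ_b ->] /mapP[l].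
by rewrite mem_iota => /andP[_ lt_l] ->; exists b => //; exists l.
Qed.

Lemma perm_bin_of_resample :
  perm_eq (map (@bin_of R) (resample f X)) (map (@bin_of R) X).
Proof.
rewrite map_flatten -map_comp (_ : map _ _ =
  [seq nseq (count_mem b (map (@bin_of R) X)) b | b <- occupied_bins X]) ?perm_count_undup //.
apply/eq_in_map => b occ_b /=; set s := map _ _.
have -> : count_mem b (map (@bin_of R) X) = size s by rewrite count_map size_map size_mkseq.
apply/all_pred1P/allP => z /mapP[y /mapP[l]]; rewrite mem_iota => /andP[_ lt_l] -> ->.
by rewrite /= bin_of_resample_point.
Qed.

Lemma resample_gt0 : all (fun y => 0 < y) (resample f X).
Proof.
apply/allP => y /mem_resample[b /valid_occupied_bin valid_b [l lt_l ->]].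
have [lo_gt0 _ _] := valid_bin_bounds R valid_b.
by have /andP[lo_le _] := f_in_bin valid_b lt_l; apply: lt_le_trans lo_le.
Qed.

Lemma size_resample : size (resample f X) = size X.
Proof. by rewrite -(size_map (@bin_of R)) (perm_size perm_bin_of_resample) size_map. Qed.

Lemma Q1_resample (q : R) : (0 < size X)%N -> 0 < q -> q <= 1 ->
  exists2 l, (l < H X (bin_of (Q1 q X)))%N &
    Q1 q (resample f X) = f (bin_of (Q1 q X)) l.
Proof.
move=> X_ne0 q_gt0 q_le1.
have Y_ne0 : (0 < size (resample f X))%N by rewrite size_resample.
have [b occ_b [l lt_l Q1_eq]] := mem_resample (Q1_mem Y_ne0 q_gt0 q_le1).
suff <- : b = bin_of (Q1 q X) by exists l.
rewrite -(bin_of_resample_point occ_b lt_l) -Q1_eq /Q1 size_resample.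
exact: bin_of_nth_sort resample_gt0 perm_bin_of_resample (Q1_rank_lt X_ne0 q_gt0 q_le1).
Qed.
End Resampling.

Section BinEstimates.
Variable R : realType.

Lemma harmonic_mean_in_itv (a b : R) : 0 < a -> a < b ->
  a <= 2 * a * b / (a + b) < b.
Proof.
move=> a_gt0 lt_ab; have ab_gt0 : 0 < a + b by lra.
by rewrite ler_pdivlMr // ltr_pdivrMr //; apply/andP; split; nra.
Qed.

Lemma fair_point_in_itv (a b : R) (l m : nat) : a < b -> (l < m)%N ->
  a <= a + l.+1%:R / m.+1%:R * (b - a) < b.
Proof.
move=> lt_ab lt_lm.
have r_gt0 : 0 < l.+1%:R / m.+1%:R :> R by rewrite divr_gt0 ?ltr0n.
have r_lt1 : l.+1%:R / m.+1%:R < 1 :> R.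
  by rewrite ltr_pdivrMr ?ltr0n // mul1r ltr_nat ltnS.
move: (l.+1%:R / m.+1%:R) r_gt0 r_lt1 => r r_gt0 r_lt1.
apply/andP; split; nra.
Qed.

Lemma dist_harmonic_mean_le (a b x : R) :
  0 < a -> 10 * b <= 11 * a -> a <= x < b ->
  `|x - 2 * a * b / (a + b)| <= 21^-1 * x.
Proof.
move=> a_gt0 narrow_ab /andP[lo_x x_hi]; have ab_gt0 : 0 < a + b by lra.
have h_def : 2 * a * b / (a + b) * (a + b) = 2 * a * b by rewrite mulfVK // gt_eqF.
move: (2 * a * b / (a + b)) h_def => h h_def.
have h_le : 21 * h <= 22 * a by rewrite -(ler_pM2r ab_gt0); nra.
have h_ge : 20 * b <= 21 * h by rewrite -(ler_pM2r ab_gt0); nra.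
rewrite ler_norml; apply/andP; split; lra.
Qed.

Lemma dist_in_itv_le (a b x y : R) :
  10 * b <= 11 * a -> a <= x < b -> a <= y < b ->
  `|x - y| <= 10^-1 * x.
Proof.
move=> narrow_ab /andP[lo_x x_hi] /andP[lo_y y_hi].
rewrite ler_norml; apply/andP; split; lra.
Qed.

Lemma dist_midpoint_le (a b x : R) : 10 * b <= 11 * a -> a <= x < b ->
  `|x - (a + 1%:R / 2%:R * (b - a))| <= 20^-1 * x.
Proof.
move=> narrow_ab /andP[lo_x x_hi].
rewrite ler_norml; apply/andP; split; lra.
Qed.
End BinEstimates.

Definition harmonic_point (R : realType) (b : int * int) : R :=
  2 * bin_lo R b * bin_hi R b / (bin_lo R b + bin_hi R b).

Definition fair_point (R : realType) (X : seq R) (b : int * int) (l : nat) : R :=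
  bin_lo R b + l.+1%:R / (H X b).+1%:R * (bin_hi R b - bin_lo R b).

Lemma resample_pE (R : realType) (X : seq R) :
  resample_p X = resample (fun b _ => harmonic_point R b) X.
Proof.
congr flatten; apply/eq_map => b; set c := harmonic_point R b.
rewrite -[in nseq _ _](size_mkseq (fun _ => c) (H X b)).
by apply/esym/all_pred1P/allP => _ /mapP[l _ ->] /=.
Qed.

Lemma resample_fE (R : realType) (X : seq R) : resample_f X = resample (fair_point X) X.
Proof. by []. Qed.

Lemma harmonic_point_in_bin (R : realType) (b : int * int) : valid_bin b ->
  bin_lo R b <= harmonic_point R b < bin_hi R b.
Proof. by move=> /(valid_bin_bounds R)[lo_gt0 lt_lo_hi _]; apply: harmonic_mean_in_itv. Qed.

Lemma fair_point_in_bin (R : realType) (X : seq R) (b : int * int) (l : nat) :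
  valid_bin b -> (l < H X b)%N -> bin_lo R b <= fair_point X b l < bin_hi R b.
Proof. by move=> /(valid_bin_bounds R)[_ lt_lo_hi _]; apply: fair_point_in_itv. Qed.

Theorem mainTheorem11 (R : realType) (X : seq R) (q : R) :
  (0 < size X)%N ->
  all (fun x => 0 < x) X ->
  0 < q -> q <= 1 ->
  [/\ `|Q1 q X - Q1 q (resample_p X)| <= 21^-1 * Q1 q X,
      `|Q1 q X - Q1 q (resample_f X)| <= 10^-1 * Q1 q X &
      (H X (bin_of (Q1 q X)) = 1%N ->
       `|Q1 q X - Q1 q (resample_f X)| <= 20^-1 * Q1 q X)].
Proof.
move=> X_ne0 X_gt0 q_gt0 q_le1.
have x_gt0 : 0 < Q1 q X by apply: (allP X_gt0); apply: Q1_mem.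
have [valid_B x_in] := bin_ofP x_gt0.
have [lo_gt0 _ narrow_B] := valid_bin_bounds R valid_B.
have [l lt_l Q1_f] := Q1_resample X_gt0 (@fair_point_in_bin R X) X_ne0 q_gt0 q_le1.
rewrite resample_fE Q1_f resample_pE; split.
- have [_ _ ->] := Q1_resample X_gt0 (fun b _ valid_b _ => harmonic_point_in_bin R valid_b)
    X_ne0 q_gt0 q_le1.
  exact: dist_harmonic_mean_le.
- by apply: dist_in_itv_le narrow_B x_in _; apply: fair_point_in_bin.
- move=> H_B; move: lt_l; rewrite /fair_point H_B ltnS leqn0 => /eqP ->.
  exact: dist_midpoint_le.
Qed.
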